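(* Let $\Theta=\Theta(t)$ be a solution of the Kuramoto model with coupling strength $\kappa>0$, and let $\mathcal{I}$ be a time interval on which $R(t):=R(\Theta(t))>0$, with $\phi(t)$ a smooth branch of the phase order parameter on $\mathcal{I}$. Define $$\Delta(t):=\frac1N\sum_{k=1}^N\sin^2(\theta_k(t)-\phi(t)),\qquad t\in\mathcal{I}.$$ Then $$\dot R(t)\ \ge\ \kappa\sqrt{\Delta(t)}\left(R(t)\sqrt{\Delta(t)}-\frac{D(\Omega)}{2\kappa}\right),\qquad t\in\mathcal{I}.$$
   Context: Kuramoto model: for $N\ge 2$, natural frequencies $\Omega=(\nu_1,\dots,\nu_N)\in\mathbb{R}^N$ and coupling strength $\kappa$, the phases $\Theta(t)=(\theta_1(t),\dots,\theta_N(t))\in\mathbb{R}^N$ satisfy $\dot\theta_i=\nu_i+\frac{\kappa}{N}\sum_{j=1}^N\sin(\theta_j-\theta_i)$, $1\le i\le N$. $D(\Omega):=\max_{i,j}|\nu_i-\nu_j|$. The order parameters $R(\Theta)\in[0,1]$ and $\phi(\Theta)$ (defined mod $2\pi$ when $R>0$) are given by $R(\Theta)e^{\mathrm{i}\phi(\Theta)}=\frac1N\sum_{j=1}^Ne^{\mathrm{i}\theta_j}$. *)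

From Stdlib Require Import Reals Lra.
From Coquelicot Require Import Coquelicot.
Open Scope R_scope.

Fixpoint sumN (f : nat -> R) (n : nat) : R :=
  match n with O => 0 | S m => sumN f m + f m end.

Fixpoint maxN (f : nat -> R) (n : nat) : R :=
  match n with O => 0 | S m => Rmax (maxN f m) (f m) end.

Definition Ddiam (N : nat) (nu : nat -> R) : R :=
  maxN (fun i => maxN (fun j => Rabs (nu i - nu j)) N) N.

(* real and imaginary parts of (1/N) sum_j e^{i theta_j} *)
Definition ordRe (N : nat) (th : nat -> R) : R := / INR N * sumN (fun j => cos (th j)) N.
Definition ordIm (N : nat) (th : nat -> R) : R := / INR N * sumN (fun j => sin (th j)) N.

Definition ordR (N : nat) (th : nat -> R) : R :=
  sqrt (ordRe N th ^ 2 + ordIm N th ^ 2).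

Definition kuramoto_solution (N : nat) (nu : nat -> R) (kappa : R)
  (theta : nat -> R -> R) : Prop :=
  forall i t, (i < N)%nat ->
    is_derive (theta i) t
      (nu i + kappa / INR N * sumN (fun j => sin (theta j t - theta i t)) N).

Definition is_interval (I : R -> Prop) : Prop :=
  forall a b c, I a -> I c -> a <= b <= c -> I b.

From Pilot Require Import Defs.
From Stdlib Require Import Reals Lra Lia.
From Coquelicot Require Import Coquelicot.
Open Scope R_scope.

(* Write s_j = sin(theta_j - phi).  Since
   R e^{i phi} = (1/N) sum_k e^{i theta_k}, every average of shifted sines is
   (1/N) sum_k sin(theta_k - a) = R sin(phi - a); this gives sum_j s_j = 0
   (a = phi) and the mean-field form of the Kuramoto vector field,
   theta_j' = nu_j - kappa R s_j (a = theta_j).  Differentiating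
   R = sqrt(Re^2 + Im^2) yields R' = -(1/N) sum_j theta_j' s_j, hence
   R' = kappa R Delta - (1/N) sum_j nu_j s_j.  Because sum_j s_j = 0 we may
   replace nu_j by nu_j - c, where c is the midpoint of the frequencies, so
   |nu_j - c| <= D/2; with the Cauchy-Schwarz bound
   (1/N) sum_j |s_j| <= sqrt Delta the drift term is at most (D/2) sqrt Delta,
   which is the claim. *)

Lemma sumN_ext (f g : nat -> R) n :
  (forall j, (j < n)%nat -> f j = g j) -> sumN f n = sumN g n.
Proof.
  induction n as [|n IH]; simpl; intros H; auto.
  rewrite IH by (intros; apply H; lia). rewrite H by lia. reflexivity.
Qed.

Lemma sumN_plus (f g : nat -> R) n :
  sumN (fun j => f j + g j) n = sumN f n + sumN g n.
Proof. induction n as [|n IH]; simpl; [lra | rewrite IH; lra]. Qed.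

Lemma sumN_scal c (f : nat -> R) n : sumN (fun j => c * f j) n = c * sumN f n.
Proof. induction n as [|n IH]; simpl; [lra | rewrite IH; lra]. Qed.

Lemma sumN_const c n : sumN (fun _ => c) n = INR n * c.
Proof. induction n as [|n IH]; simpl sumN; [simpl; lra | rewrite IH, S_INR; lra]. Qed.

Lemma sumN_le (f g : nat -> R) n :
  (forall j, (j < n)%nat -> f j <= g j) -> sumN f n <= sumN g n.
Proof.
  induction n as [|n IH]; simpl; intros H; [lra|].
  assert (f n <= g n) by (apply H; lia).
  assert (sumN f n <= sumN g n) by (apply IH; intros; apply H; lia).
  lra.
Qed.

Lemma sumN_nonneg (f : nat -> R) n :
  (forall j, (j < n)%nat -> 0 <= f j) -> 0 <= sumN f n.
Proof.
  intros H. replace 0 with (sumN (fun _ => 0) n) by (rewrite sumN_const; lra).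
  now apply sumN_le.
Qed.

Lemma sumN_abs (f : nat -> R) n : Rabs (sumN f n) <= sumN (fun j => Rabs (f j)) n.
Proof.
  induction n as [|n IH]; simpl.
  - rewrite Rabs_R0; lra.
  - eapply Rle_trans; [apply Rabs_triang | lra].
Qed.

(* The mean (1/n) sum_j |a_j| is bounded by the root mean square
   sqrt((1/n) sum_j a_j^2); this is Cauchy-Schwarz against the constant 1,
   obtained from the nonnegativity of sum_j (|a_j| - mean)^2. *)
Lemma mean_abs_le_rms (a : nat -> R) n : (0 < n)%nat ->
  / INR n * sumN (fun j => Rabs (a j)) n <= sqrt (/ INR n * sumN (fun j => a j ^ 2) n).
Proof.
  intros Hn. assert (HN : 0 < INR n) by (apply lt_0_INR; lia).
  set (M := / INR n * sumN (fun j => Rabs (a j)) n).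
  set (Q := / INR n * sumN (fun j => a j ^ 2) n).
  assert (HM : 0 <= M).
  { apply Rmult_le_pos; [left; now apply Rinv_0_lt_compat |].
    apply sumN_nonneg; intros; apply Rabs_pos. }
  assert (Hvar : 0 <= sumN (fun j => (Rabs (a j) - M) ^ 2) n)
    by (apply sumN_nonneg; intros; apply pow2_ge_0).
  rewrite (sumN_ext _ (fun j => a j ^ 2 + ((-2 * M) * Rabs (a j) + M ^ 2))) in Hvar
    by (intros j _; rewrite <- (pow2_abs (a j)); ring).
  rewrite !sumN_plus, sumN_scal, sumN_const in Hvar.
  assert (E1 : sumN (fun j => Rabs (a j)) n = INR n * M) by (unfold M; field; lra).
  assert (E2 : sumN (fun j => a j ^ 2) n = INR n * Q) by (unfold Q; field; lra).
  rewrite E1, E2 in Hvar.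
  assert (M ^ 2 <= Q) by nra.
  rewrite <- (sqrt_pow2 M HM). apply sqrt_le_1_alt. lra.
Qed.

Lemma maxN_ge (f : nat -> R) n i : (i < n)%nat -> f i <= Defs.maxN f n.
Proof.
  induction n as [|n IH]; simpl; intros H; [lia|].
  destruct (Nat.eq_dec i n) as [->|Hne]; [apply Rmax_r|].
  eapply Rle_trans; [apply IH; lia | apply Rmax_l].
Qed.

Lemma Ddiam_ge (nu : nat -> R) N i j :
  (i < N)%nat -> (j < N)%nat -> Rabs (nu i - nu j) <= Ddiam N nu.
Proof.
  intros Hi Hj. unfold Ddiam.
  eapply Rle_trans; [| apply maxN_ge with (i := i); exact Hi].
  apply (maxN_ge (fun k => Rabs (nu i - nu k))); exact Hj.
Qed.

Lemma exists_argmin (nu : nat -> R) n : (1 <= n)%nat ->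
  exists a, (a < n)%nat /\ forall j, (j < n)%nat -> nu a <= nu j.
Proof.
  induction n as [|n IH]; intros H; [lia|].
  destruct (Nat.eq_dec n 0) as [->|Hn].
  { exists O; split; [lia|]; intros j Hj; replace j with O by lia; lra. }
  destruct IH as [a [Ha Hmin]]; [lia|].
  destruct (Rle_dec (nu a) (nu n)).
  - exists a; split; [lia|]. intros j Hj.
    destruct (Nat.eq_dec j n) as [->|]; [assumption | apply Hmin; lia].
  - exists n; split; [lia|]. intros j Hj.
    destruct (Nat.eq_dec j n) as [->|]; [lra|].
    specialize (Hmin j ltac:(lia)); lra.
Qed.

(* The midpoint of the frequency range is within D/2 of every frequency. *)
Lemma exists_frequency_center (nu : nat -> R) N : (1 <= N)%nat ->
  exists c, forall j, (j < N)%nat -> Rabs (nu j - c) <= Ddiam N nu / 2.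
Proof.
  intros H.
  destruct (exists_argmin nu N H) as [a [Ha Hmin]].
  destruct (exists_argmin (fun j => - nu j) N H) as [b [Hb Hmax]].
  pose proof (Ddiam_ge nu N b a Hb Ha) as Hab.
  exists ((nu a + nu b) / 2). intros j Hj.
  assert (nu a <= nu b) by (apply Hmin; exact Hb).
  specialize (Hmin j Hj). specialize (Hmax j Hj). cbv beta in Hmax.
  rewrite Rabs_pos_eq in Hab by lra. apply Rabs_le. lra.
Qed.

(* A weighted sum whose weights s_j sum to zero only sees the spread of
   the frequencies: |(1/N) sum_j nu_j s_j| <= (D/2) * rms(s). *)
Lemma centered_sum_bound (nu s : nat -> R) N : (0 < N)%nat -> sumN s N = 0 ->
  / INR N * Rabs (sumN (fun j => nu j * s j) N)
  <= Ddiam N nu / 2 * sqrt (/ INR N * sumN (fun j => s j ^ 2) N).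
Proof.
  intros HN Hs0. assert (HNp : 0 < / INR N) by (apply Rinv_0_lt_compat, lt_0_INR; lia).
  destruct (exists_frequency_center nu N ltac:(lia)) as [c Hc].
  assert (Hshift : sumN (fun j => nu j * s j) N = sumN (fun j => (nu j - c) * s j) N).
  { replace (sumN (fun j => (nu j - c) * s j) N)
      with (sumN (fun j => nu j * s j) N + (- c) * sumN s N)
      by (rewrite <- sumN_scal, <- sumN_plus; apply sumN_ext; intros; ring).
    rewrite Hs0; ring. }
  assert (Hterm : Rabs (sumN (fun j => (nu j - c) * s j) N)
                  <= Ddiam N nu / 2 * sumN (fun j => Rabs (s j)) N).
  { eapply Rle_trans; [apply sumN_abs|].
    rewrite <- sumN_scal. apply sumN_le. intros j Hj.
    rewrite Rabs_mult. apply Rmult_le_compat_r; [apply Rabs_pos | auto]. }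
  pose proof (mean_abs_le_rms s N HN) as Hcs.
  assert (HD : 0 <= Ddiam N nu)
    by (eapply Rle_trans; [apply Rabs_pos | apply (Ddiam_ge nu N 0 0); lia]).
  rewrite Hshift. nra.
Qed.

Definition polar_form (N : nat) (th : nat -> R) (Rt ph : R) : Prop :=
  Rt * cos ph = ordRe N th /\ Rt * sin ph = ordIm N th.

Lemma mean_shifted_sin (N : nat) (th : nat -> R) (Rt ph a : R) : (0 < N)%nat -> polar_form N th Rt ph ->
  / INR N * sumN (fun k => sin (th k - a)) N = Rt * sin (ph - a).
Proof.
  intros HN [Hc Hs]. unfold ordRe, ordIm in Hc, Hs.
  rewrite (sumN_ext _ (fun k => cos a * sin (th k) + (- sin a) * cos (th k)))
    by (intros k _; rewrite sin_minus; ring).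
  rewrite sumN_plus, !sumN_scal, sin_minus.
  replace (/ INR N * (cos a * sumN (fun k => sin (th k)) N
                      + - sin a * sumN (fun k => cos (th k)) N))
    with (cos a * (/ INR N * sumN (fun k => sin (th k)) N)
          - sin a * (/ INR N * sumN (fun k => cos (th k)) N)) by ring.
  rewrite <- Hc, <- Hs. ring.
Qed.

Lemma sum_sin_deviation_zero (N : nat) (th : nat -> R) (Rt ph : R) : (0 < N)%nat -> polar_form N th Rt ph ->
  sumN (fun k => sin (th k - ph)) N = 0.
Proof.
  intros HN Hpol. pose proof (mean_shifted_sin N th Rt ph ph HN Hpol) as E.
  rewrite Rminus_diag, sin_0, Rmult_0_r in E.
  assert (0 < / INR N) by (apply Rinv_0_lt_compat, lt_0_INR; lia). nra.
Qed.

Lemma kuramoto_mean_field (N : nat) (nu : nat -> R) (kappa : R) (th : nat -> R)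
  (Rt ph : R) (j : nat) :
  (0 < N)%nat -> polar_form N th Rt ph ->
  nu j + kappa / INR N * sumN (fun k => sin (th k - th j)) N
  = nu j - kappa * Rt * sin (th j - ph).
Proof.
  intros HN Hpol. unfold Rdiv.
  rewrite Rmult_assoc, (mean_shifted_sin N th Rt ph (th j) HN Hpol).
  rewrite <- (Ropp_minus_distr (th j)), sin_neg. ring.
Qed.

Lemma is_derive_sumN (f : nat -> R -> R) (df : nat -> R) n x :
  (forall j, (j < n)%nat -> is_derive (f j) x (df j)) ->
  is_derive (fun y => sumN (fun j => f j y) n) x (sumN df n).
Proof.
  induction n as [|n IH]; intros H; simpl.
  - apply (is_derive_const (V := R_NormedModule) 0 x).
  - apply (is_derive_plus (fun y => sumN (fun j => f j y) n) (f n));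
      [apply IH; intros; apply H; lia | apply H; lia].
Qed.

Lemma is_derive_modulus (x y : R -> R) (t dx dy : R) :
  is_derive x t dx -> is_derive y t dy -> 0 < x t ^ 2 + y t ^ 2 ->
  is_derive (fun s => sqrt (x s ^ 2 + y s ^ 2)) t
    ((x t * dx + y t * dy) / sqrt (x t ^ 2 + y t ^ 2)).
Proof.
  intros Dx Dy Hpos.
  pose proof (is_derive_plus _ _ _ _ _ (is_derive_pow _ 2 _ _ Dx) (is_derive_pow _ 2 _ _ Dy)) as Du.
  pose proof (is_derive_sqrt _ _ _ Du Hpos) as Dr.
  pose proof (sqrt_lt_R0 _ Hpos).
  set (r := sqrt (x t ^ 2 + y t ^ 2)) in *.
  replace ((x t * dx + y t * dy) / r)
    with (plus (INR 2 * dx * x t ^ Init.Nat.pred 2) (INR 2 * dy * y t ^ Init.Nat.pred 2)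
          / (2 * r)) by (unfold plus; simpl; field; lra).
  exact Dr.
Qed.

Lemma is_derive_order_parameter (N : nat) (th : nat -> R -> R) (v : nat -> R)
  (t Rt ph : R) :
  (0 < N)%nat -> (forall j, (j < N)%nat -> is_derive (th j) t (v j)) ->
  Rt = ordR N (fun j => th j t) -> 0 < Rt ->
  polar_form N (fun j => th j t) Rt ph ->
  is_derive (fun s => ordR N (fun j => th j s)) t
    (- / INR N * sumN (fun j => v j * sin (th j t - ph)) N).
Proof.
  intros HN Dth HR Hpos [Hc Hs].
  assert (Dre : is_derive (fun s => ordRe N (fun j => th j s)) t
                  (/ INR N * sumN (fun j => v j * - sin (th j t)) N)).
  { apply is_derive_scal, (is_derive_sumN (fun j s => cos (th j s))). intros j Hj.
    apply (is_derive_comp cos (th j)); [apply is_derive_cos | auto]. }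
  assert (Dim : is_derive (fun s => ordIm N (fun j => th j s)) t
                  (/ INR N * sumN (fun j => v j * cos (th j t)) N)).
  { apply is_derive_scal, (is_derive_sumN (fun j s => sin (th j s))). intros j Hj.
    apply (is_derive_comp sin (th j)); [apply is_derive_sin | auto]. }
  assert (Hmod : ordRe N (fun j => th j t) ^ 2 + ordIm N (fun j => th j t) ^ 2 = Rt ^ 2).
  { rewrite <- Hc, <- Hs. pose proof (sin2_cos2 ph) as H. unfold Rsqr in H. nra. }
  pose proof (is_derive_modulus _ _ _ _ _ Dre Dim) as D.
  cbv beta in D. unfold ordR. rewrite Hmod, sqrt_pow2, <- Hc, <- Hs in D by lra.
  assert (Hval : (Rt * cos ph * (/ INR N * sumN (fun j => v j * - sin (th j t)) N)
                  + Rt * sin ph * (/ INR N * sumN (fun j => v j * cos (th j t)) N)) / Rt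
                 = - / INR N * sumN (fun j => v j * sin (th j t - ph)) N).
  { rewrite (sumN_ext (fun j => v j * sin (th j t - ph)) (fun j => (-1) * (cos ph * (v j * - sin (th j t))
                                        + sin ph * (v j * cos (th j t)))))
      by (intros j _; rewrite sin_minus; ring).
    assert (0 < INR N) by (apply lt_0_INR; lia).
    rewrite sumN_scal, sumN_plus, !sumN_scal. field. lra. }
  rewrite <- Hval. apply D. nra.
Qed.

Theorem lemma2p1 (N : nat) (nu : nat -> R) (kappa : R) (theta : nat -> R -> R)
  (I : R -> Prop) (phi : R -> R) :
  (2 <= N)%nat -> 0 < kappa ->
  kuramoto_solution N nu kappa theta ->
  is_interval I ->
  (forall t, I t -> 0 < ordR N (fun j => theta j t)) ->
  (forall t, I t ->
     ordR N (fun j => theta j t) * cos (phi t) = ordRe N (fun j => theta j t) /\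
     ordR N (fun j => theta j t) * sin (phi t) = ordIm N (fun j => theta j t)) ->
  (forall t, I t -> ex_derive phi t) ->
  forall t, I t ->
    let Rt := ordR N (fun j => theta j t) in
    let Delta := / INR N * sumN (fun k => (sin (theta k t - phi t)) ^ 2) N in
    ex_derive (fun s => ordR N (fun j => theta j s)) t /\
    Derive (fun s => ordR N (fun j => theta j s)) t
      >= kappa * sqrt Delta * (Rt * sqrt Delta - Ddiam N nu / (2 * kappa)).
Proof.
  intros HN Hk Hsol _ Hpos Hphase _ t It Rt Delta.
  assert (HN0 : (0 < N)%nat) by lia.
  assert (Hpol : polar_form N (fun j => theta j t) Rt (phi t)) by exact (Hphase t It).
  set (dev := fun j => sin (theta j t - phi t)).
  assert (Dth : forall j, (j < N)%nat ->
            is_derive (theta j) t (nu j - kappa * Rt * dev j)).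
  { intros j Hj. unfold dev.
    rewrite <- (kuramoto_mean_field N nu kappa _ Rt (phi t) j HN0 Hpol).
    now apply Hsol. }
  pose proof (is_derive_order_parameter N theta _ t Rt (phi t) HN0 Dth eq_refl
                (Hpos t It) Hpol) as DR.
  split; [eexists; exact DR|].
  assert (Hder : Derive (fun s => ordR N (fun j => theta j s)) t
                 = - / INR N * sumN (fun j => (nu j - kappa * Rt * dev j) * dev j) N)
    by exact (is_derive_unique _ _ _ DR).
  rewrite Hder.
  assert (Hspeed : - / INR N * sumN (fun j => (nu j - kappa * Rt * dev j) * dev j) N
                   = kappa * Rt * Delta - / INR N * sumN (fun j => nu j * dev j) N).
  { rewrite (sumN_ext _ (fun j => nu j * dev j + (- (kappa * Rt)) * dev j ^ 2))
      by (intros; ring).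
    rewrite sumN_plus, sumN_scal. unfold Delta, dev. ring. }
  rewrite Hspeed.
  pose proof (centered_sum_bound nu dev N HN0
                (sum_sin_deviation_zero N _ Rt (phi t) HN0 Hpol)) as Hdrift.
  change (/ INR N * Rabs (sumN (fun j => nu j * dev j) N)
          <= Ddiam N nu / 2 * sqrt Delta) in Hdrift.
  assert (HD0 : 0 <= Delta).
  { apply Rmult_le_pos; [left; apply Rinv_0_lt_compat, lt_0_INR; lia|].
    apply sumN_nonneg; intros; apply pow2_ge_0. }
  pose proof (sqrt_sqrt Delta HD0) as Hsqrt.
  pose proof (Rle_abs (sumN (fun j => nu j * dev j) N)).
  assert (0 < / INR N) by (apply Rinv_0_lt_compat, lt_0_INR; lia).
  replace (kappa * sqrt Delta * (Rt * sqrt Delta - Ddiam N nu / (2 * kappa)))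
    with (kappa * Rt * (sqrt Delta * sqrt Delta) - Ddiam N nu / 2 * sqrt Delta)
    by (field; lra).
  rewrite Hsqrt. nra.
Qed.
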